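(* Let $\alpha\neq 0$, $\beta,\gamma$ be real numbers and $\lambda$ a nonnegative integer. For all nonnegative integers $n$, $$\mathcal{E}_{n}^{(\lambda)}(\alpha,\beta,\gamma)=\sum_{k=0}^{n}S(n,k,\alpha,\beta,\gamma)\binom{k+\lambda-1}{k}k!\frac{(-\beta)^{k}}{2^{k}}$$ and $$\mathcal{E}_{n}^{(\lambda)}(\alpha,\beta,\gamma)=\sum_{k=0}^{n}S(n,k,\alpha,-\beta,\gamma-\beta\lambda)\binom{k+\lambda-1}{k}k!\frac{\beta^{k}}{2^{k}}.$$
   Context: For a number $t$ and $\alpha$, the generalised factorial is $(t|\alpha)_n=\prod_{j=0}^{n-1}(t-j\alpha)$ for $n\ge 1$ and $(t|\alpha)_0=1$. For parameters $\alpha,\beta,\gamma$, the generalised Stirling numbers $S(n,k,\alpha,\beta,\gamma)$ ($0\le k\le n$) are defined by the polynomial identity $(t|\alpha)_n=\sum_{k=0}^{n}S(n,k,\alpha,\beta,\gamma)\,(t-\gamma|\beta)_k$ in the variable $t$. For a nonnegative integer $\lambda$ put $\binom{k+\lambda-1}{k}=\lambda(\lambda+1)\cdots(\lambda+k-1)/k!$ (equal to $1$ for $k=0$). The higher order generalised Euler polynomials $\mathcal{E}_n^{(\lambda)}(\alpha,\beta,x)$ are defined by the formal power series identity $$\left[\frac{2}{(1+\alpha t)^{\beta/\alpha}+1}\right]^{\lambda}(1+\alpha t)^{x/\alpha}=\sum_{n=0}^{\infty}\mathcal{E}_{n}^{(\lambda)}(\alpha,\beta,x)\frac{t^{n}}{n!},$$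 where $(1+\alpha t)^{c}=\sum_{j\ge0}\binom{c}{j}\alpha^jt^j$. *)

From mathcomp Require Import all_boot all_order all_algebra.
Set Implicit Arguments. Unset Strict Implicit. Unset Printing Implicit Defensive.
Import Order.TTheory GRing.Theory Num.Theory.
Local Open Scope ring_scope.

Section Defs.
Variable R : fieldType.

Definition gfact (a : R) (n : nat) : {poly R} :=
  \prod_(j < n) ('X - (j%:R * a)%:P).

Definition gfact_shift (c b : R) (k : nat) : {poly R} :=
  \prod_(j < k) ('X - (c + j%:R * b)%:P).

Definition is_genStirling (a b c : R) (S : nat -> nat -> R) : Prop :=
  forall n : nat, gfact a n = \sum_(k < n.+1) S n k *: gfact_shift c b k.

(* formal power series as coefficient sequences *)
Definition sone : nat -> R := fun n => if n is 0 then 1 else 0.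
Definition sadd (f g : nat -> R) : nat -> R := fun n => f n + g n.
Definition sscale (c : R) (f : nat -> R) : nat -> R := fun n => c * f n.
Definition smul (f g : nat -> R) : nat -> R :=
  fun n => \sum_(i < n.+1) f i * g (n - i)%N.
Definition spow (f : nat -> R) (k : nat) : nat -> R := iter k (smul f) sone.

(* first n+1 coefficients of the multiplicative inverse of f (f 0 <> 0) *)
Fixpoint sinv_upto (f : nat -> R) (n : nat) : seq R :=
  match n with
  | 0 => [:: (f 0%N)^-1]
  | m.+1 => let s := sinv_upto f m in
      rcons s (- (f 0%N)^-1 * \sum_(i < m.+1) f i.+1 * nth 0 s (m - i)%N)
  end.
Definition sinv (f : nat -> R) : nat -> R := fun n => nth 0 (sinv_upto f n) n.

Definition gbinom (c : R) (j : nat) : R :=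
  (\prod_(i < j) (c - i%:R)) / (j`!)%:R.

(* (1 + a t)^c = sum_j binom(c,j) a^j t^j *)
Definition sbinpow (a c : R) : nat -> R := fun j => gbinom c j * a ^+ j.

Definition genEuler (lam : nat) (a b x : R) (n : nat) : R :=
  (n`!)%:R *
  smul (spow (sscale 2 (sinv (sadd (sbinpow a (b / a)) sone))) lam)
       (sbinpow a (x / a)) n.

(* binom(k + lam - 1, k) = lam (lam+1) ... (lam+k-1) / k! *)
Definition rbinom (lam k : nat) : R :=
  (\prod_(i < k) (lam + i)%:R) / (k`!)%:R.

End Defs.

(* Power series are handled through their polynomial truncations at degree n.
   Write B_c for (1 + a t)^(c/a), so that B_c B_d = B_(c+d) (Chu-Vandermonde).
   By the binomial theorem, sum_k C(j,k) (B_b - 1)^k B_g = B_(g + j b), whose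
   coefficient of t^n is (g + j b | a)_n / n!; expanding this with the Stirling
   numbers and using (j b | b)_k = b^k j!/(j-k)!, binomial inversion shows that
   the coefficient of t^n in (B_b - 1)^k B_g is S(n,k) k! b^k / n!.  As
   (B_b - 1)/2 has no constant term, [2/(B_b + 1)]^lam = (1 + (B_b - 1)/2)^(-lam)
   is the negative binomial series sum_k binom(k+lam-1,k) (-(B_b - 1)/2)^k, which
   gives the first formula.  The second is the first one for (-b, g - lam b),
   because 2/(B_b + 1) = 2 B_(-b)/(B_(-b) + 1). *)

From mathcomp Require Import all_boot all_order all_algebra.
From mathcomp Require Import ring zify.
Import Order.TTheory GRing.Theory Num.Theory.
Set Implicit Arguments. Unset Strict Implicit. Unset Printing Implicit Defensive.
Local Open Scope ring_scope.

Section EqUpto.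
Variables (R : nzRingType) (n : nat).
Implicit Types p q : {poly R}.

Definition eq_upto p q := forall i, (i <= n)%N -> p`_i = q`_i.

Lemma eq_upto_refl p : eq_upto p p.
Proof. by []. Qed.

Lemma eq_upto_sym p q : eq_upto p q -> eq_upto q p.
Proof. by move=> pq i hi; rewrite pq. Qed.

Lemma eq_upto_trans q p r : eq_upto p q -> eq_upto q r -> eq_upto p r.
Proof. by move=> pq qr i hi; rewrite pq ?qr. Qed.

Lemma eq_uptoD p p' q q' :
  eq_upto p p' -> eq_upto q q' -> eq_upto (p + q) (p' + q').
Proof. by move=> pp qq i hi; rewrite !coefD pp ?qq. Qed.

Lemma eq_uptoM p p' q q' :
  eq_upto p p' -> eq_upto q q' -> eq_upto (p * q) (p' * q').
Proof.
move=> pp qq i hi; rewrite !coefM; apply: eq_bigr => j _.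
have hj : (j <= n)%N by rewrite (leq_trans _ hi) // -ltnS.
by rewrite pp // qq // (leq_trans (leq_subr _ _) hi).
Qed.

Lemma eq_uptoMl p q q' : eq_upto q q' -> eq_upto (p * q) (p * q').
Proof. exact: eq_uptoM. Qed.

Lemma eq_uptoMr p p' q : eq_upto p p' -> eq_upto (p * q) (p' * q).
Proof. by move=> pp; apply: eq_uptoM. Qed.

Lemma eq_uptoX p p' k : eq_upto p p' -> eq_upto (p ^+ k) (p' ^+ k).
Proof.
by move=> pp; elim: k => [|k IH]; rewrite ?expr0 // !exprS; apply: eq_uptoM.
Qed.

End EqUpto.

Lemma eq_upto_inv_uniq (R : comNzRingType) n (u q q' : {poly R}) :
  eq_upto n (u * q) 1 -> eq_upto n (u * q') 1 -> eq_upto n q q'.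
Proof.
move=> uq uq'; apply: (eq_upto_trans (q := q * (u * q'))).
  by rewrite -{1}[q]mulr1; apply/eq_uptoMl/eq_upto_sym.
rewrite mulrA [q * u]mulrC; apply: (eq_upto_trans (q := 1 * q')).
  exact: eq_uptoMr.
by rewrite mul1r.
Qed.

Lemma coef_expr_small (R : nzRingType) (p : {poly R}) k i :
  p`_0 = 0 -> (i < k)%N -> (p ^+ k)`_i = 0.
Proof.
move=> p0; elim: k i => [//|k IH] i ltik; rewrite exprS coefM big1 // => j _.
case: (posnP j) => [->|j_gt0]; first by rewrite p0 mul0r.
by rewrite IH ?mulr0 //; have := ltn_ord j; lia.
Qed.

Section TruncatedSeries.
Variables (R : fieldType) (n : nat).
Implicit Types (f g : nat -> R) (p q : {poly R}).

Definition is_trunc f p := forall i, (i <= n)%N -> p`_i = f i.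

Definition series_poly f : {poly R} := \poly_(i < n.+1) f i.

Lemma series_polyP f : is_trunc f (series_poly f).
Proof. by move=> i hi; rewrite coef_poly ltnS hi. Qed.

Lemma is_trunc_sone : is_trunc (sone R) 1.
Proof. by move=> [|i] _; rewrite coef1. Qed.

Lemma is_trunc_sadd f g p q :
  is_trunc f p -> is_trunc g q -> is_trunc (sadd f g) (p + q).
Proof. by move=> fp gq i hi; rewrite coefD fp ?gq. Qed.

Lemma is_trunc_sscale c f p : is_trunc f p -> is_trunc (sscale c f) (c%:P * p).
Proof. by move=> fp i hi; rewrite coefCM fp. Qed.

Lemma is_trunc_smul f g p q :
  is_trunc f p -> is_trunc g q -> is_trunc (smul f g) (p * q).
Proof.
move=> fp gq i hi; rewrite coefM; apply: eq_bigr => j _.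
have hj : (j <= n)%N by rewrite (leq_trans _ hi) // -ltnS.
by rewrite fp // gq // (leq_trans (leq_subr _ _) hi).
Qed.

Lemma is_trunc_spow f p k : is_trunc f p -> is_trunc (spow f k) (p ^+ k).
Proof.
move=> fp; elim: k => [|k IH]; first exact: is_trunc_sone.
by rewrite exprS /spow iterS; apply: is_trunc_smul.
Qed.

Lemma size_sinv_upto f m : size (sinv_upto f m) = m.+1.
Proof. by elim: m => //= m IH; rewrite size_rcons IH. Qed.

Lemma nth_sinv_upto f m i : (i <= m)%N -> nth 0 (sinv_upto f m) i = sinv f i.
Proof.
elim: m => [|m IH] hi; first by move: hi; rewrite leqn0 => /eqP ->.
rewrite /= nth_rcons size_sinv_upto; case: ltngtP hi => // [lt_im _|-> _].
  by rewrite IH.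
by rewrite /sinv /= nth_rcons size_sinv_upto ltnn eqxx.
Qed.

Lemma sinvS f m :
  sinv f m.+1 = - (f 0%N)^-1 * \sum_(i < m.+1) f i.+1 * sinv f (m - i).
Proof.
rewrite /sinv /= nth_rcons size_sinv_upto ltnn eqxx; congr (_ * _).
by apply: eq_bigr => i _; rewrite nth_sinv_upto // leq_subr.
Qed.

Lemma smul_sinv f : f 0%N != 0 -> smul f (sinv f) =1 sone R.
Proof.
move=> f0 [|m]; rewrite /smul; first by rewrite big_ord1 /sinv /= mulfV.
rewrite big_ord_recl sinvS mulrA mulrN mulfV // mulN1r.
under [X in _ + X]eq_bigr => i _ do rewrite subSS.
exact: addNr.
Qed.

Lemma mul_series_poly_sinv f p :
  f 0%N != 0 -> is_trunc f p -> eq_upto n (p * series_poly (sinv f)) 1.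
Proof.
move=> f0 fp i hi; rewrite (is_trunc_smul fp (series_polyP _)) // smul_sinv //.
by rewrite is_trunc_sone.
Qed.

End TruncatedSeries.

Section FallingFactorial.
Variable R : comNzRingType.
Implicit Types c d : R.

Definition falling c j := \prod_(l < j) (c - l%:R).

Lemma falling0 c : falling c 0 = 1.
Proof. exact: big_ord0. Qed.

Lemma fallingS c j : falling c j.+1 = falling c j * (c - j%:R).
Proof. exact: big_ord_recr. Qed.

Lemma falling_nat (m k : nat) : falling m%:R k = (m ^_ k)%:R.
Proof.
elim: k => [|k IH]; first by rewrite falling0.
rewrite fallingS IH ffactnSr natrM.
by case: (leqP k m) => [/natrB ->|/ffact_small ->]; rewrite ?mul0r.
Qed.

Lemma fallingD c d i :
  falling (c + d) i = \sum_(j < i.+1) 'C(i, j)%:R * (falling c j * falling d (i - j)).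
Proof.
elim: i => [|i IH]; first by rewrite big_ord1 /= !falling0 bin0 !mul1r.
(* c + d - i = (c - j) + (d - (i - j)) *)
have split_factor (j : 'I_i.+1) :
    'C(i, j)%:R * (falling c j * falling d (i - j)) * (c + d - i%:R)
  = 'C(i, j)%:R * (falling c j.+1 * falling d (i - j))
    + 'C(i, j)%:R * (falling c j * falling d (i - j).+1).
  have hj : (j <= i)%N by rewrite -ltnS.
  by rewrite !fallingS natrB //; ring.
rewrite fallingS IH mulr_suml (eq_bigr _ (fun j _ => split_factor j)) big_split /=.
apply: esym; rewrite big_ord_recl /= falling0 subn0.
under eq_bigr => j _ do rewrite /bump /= add1n binS natrD mulrDl subSS.
rewrite big_split /= [X in _ + X = _]addrC addrCA; congr (_ + _).
rewrite [in RHS]big_ord_recl /= falling0 subn0 !bin0 mul1r; congr (_ + _).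
rewrite big_ord_recr /= bin_small // mul0r addr0.
by apply: eq_bigr => j _; rewrite /bump /= add1n subnSK.
Qed.

End FallingFactorial.

Section BinomialSeries.
Variable R : numFieldType.
Implicit Types a b c d x : R.

Lemma fact_neq0 m : (m`!)%:R != 0 :> R.
Proof. by rewrite pnatr_eq0 -lt0n fact_gt0. Qed.

Lemma sbinpow0 a c : sbinpow a c 0 = 1.
Proof. by rewrite /sbinpow /gbinom big_ord0 divr1 mulr1. Qed.

Lemma sbinpow_exp0 a : sbinpow a 0 =1 sone R.
Proof.
by case=> [|i]; rewrite ?sbinpow0 // /sbinpow /gbinom big_ord_recl subrr !mul0r.
Qed.

Lemma smul_sbinpow a c d : smul (sbinpow a c) (sbinpow a d) =1 sbinpow a (c + d).
Proof.
move=> i; rewrite /smul /sbinpow /gbinom -/(falling (c + d) i) fallingD !mulr_suml.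
apply: eq_bigr => j _; have le_ji : (j <= i)%N by rewrite -ltnS.
have -> : a ^+ i = a ^+ j * a ^+ (i - j) by rewrite -exprD subnKC.
rewrite -(bin_fact le_ji) !natrM.
have Cij_neq0 : 'C(i, j)%:R != 0 :> R by rewrite pnatr_eq0 -lt0n bin_gt0.
rewrite -/(falling c j) -/(falling d (i - j)).
by field; rewrite Cij_neq0 !fact_neq0.
Qed.

Lemma horner_gfact a x m :
  a != 0 -> (gfact a m).[x] = (m`!)%:R * sbinpow a (x / a) m.
Proof.
move=> a_neq0; rewrite /gfact horner_prod /sbinpow /gbinom mulrA [_ * (_ / _)]mulrC.
rewrite divfK ?fact_neq0 //.
have -> : a ^+ m = \prod_(j < m) a by rewrite prodr_const card_ord.
rewrite -big_split /=.
by apply: eq_bigr => j _; rewrite hornerXsubC; field.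
Qed.

Lemma horner_gfact_shift b c (j k : nat) :
  (gfact_shift c b k).[c + j%:R * b] = b ^+ k * (j ^_ k)%:R.
Proof.
rewrite /gfact_shift horner_prod -falling_nat.
have -> : b ^+ k = \prod_(l < k) b by rewrite prodr_const card_ord.
rewrite -big_split /=; apply: eq_bigr => l _; rewrite hornerXsubC; ring.
Qed.

End BinomialSeries.

Section BinomialPoly.
Variables (R : numFieldType) (n : nat) (a : R).
Implicit Types c d : R.

Definition binpoly c := series_poly n (sbinpow a c).

Lemma binpoly_coef0 c : (binpoly c)`_0 = 1.
Proof. by rewrite series_polyP // sbinpow0. Qed.

Lemma binpolyD c d : eq_upto n (binpoly c * binpoly d) (binpoly (c + d)).
Proof.
move=> i hi; rewrite (is_trunc_smul (series_polyP _) (series_polyP _)) //.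
by rewrite smul_sbinpow series_polyP.
Qed.

Lemma binpoly_exp0 : eq_upto n (binpoly 0) 1.
Proof. by move=> i hi; rewrite series_polyP // sbinpow_exp0 (@is_trunc_sone R n). Qed.

Lemma binpolyX c j : eq_upto n (binpoly c ^+ j) (binpoly (j%:R * c)).
Proof.
elim: j => [|j IH]; first by rewrite expr0 mul0r; apply/eq_upto_sym/binpoly_exp0.
rewrite exprS; apply: (eq_upto_trans (q := binpoly c * binpoly (j%:R * c))).
  exact: eq_uptoMl.
by rewrite -addn1 natrD mulrDl mul1r addrC; apply: binpolyD.
Qed.

End BinomialPoly.

Section BinomialInversion.
Variable V : zmodType.
Implicit Types P T : nat -> V.

Lemma sum_binom_widen n j P : (j <= n)%N ->
  \sum_(k < n.+1) P k *+ 'C(j, k) = \sum_(k < j.+1) P k *+ 'C(j, k).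
Proof.
move=> le_jn; have le_j1n1 : (j.+1 <= n.+1)%N by [].
rewrite [RHS](big_ord_widen _ (fun k => P k *+ 'C(j, k)) le_j1n1) [RHS]big_mkcond.
by apply: eq_bigr => k _; case: ltnP => // /bin_small ->.
Qed.

Lemma binomial_inversion n P T :
  (forall j, (j <= n)%N ->
     \sum_(k < j.+1) P k *+ 'C(j, k) = \sum_(k < j.+1) T k *+ 'C(j, k)) ->
  forall k, (k <= n)%N -> P k = T k.
Proof.
move=> PT; elim/ltn_ind => k IH le_kn.
have := PT k le_kn; rewrite !big_ord_recr /= !binn !mulr1n.
suff -> : \sum_(i < k) P i *+ 'C(k, i) = \sum_(i < k) T i *+ 'C(k, i) by move/addrI.
by apply: eq_bigr => i _; rewrite IH // (leq_trans _ le_kn) // ltnW.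
Qed.

End BinomialInversion.

Section StirlingCoefficients.
Variables (R : numFieldType) (n : nat) (a b g : R) (S : nat -> nat -> R).
Hypotheses (a_neq0 : a != 0) (stirlingS : is_genStirling a b g S).

Lemma coef_binpolyX_shift j :
  (binpoly n a (b / a) ^+ j * binpoly n a (g / a))`_n
  = (gfact a n).[g + j%:R * b] / (n`!)%:R.
Proof.
rewrite horner_gfact // mulrAC divff ?fact_neq0 // mul1r.
have -> : (g + j%:R * b) / a = j%:R * (b / a) + g / a by rewrite mulrDl mulrA addrC.
have shift : eq_upto n (binpoly n a (b / a) ^+ j * binpoly n a (g / a))
                       (binpoly n a (j%:R * (b / a) + g / a)).
  apply: (eq_upto_trans (q := binpoly n a (j%:R * (b / a)) * binpoly n a (g / a))).
    exact/eq_uptoMr/binpolyX.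
  exact: binpolyD.
by rewrite shift // series_polyP.
Qed.

Lemma coef_stirling k : (k <= n)%N ->
  ((binpoly n a (b / a) - 1) ^+ k * binpoly n a (g / a))`_n
  = S n k * (k`!)%:R * b ^+ k / (n`!)%:R.
Proof.
pose P i := ((binpoly n a (b / a) - 1) ^+ i * binpoly n a (g / a))`_n.
pose T i := S n i * (i`!)%:R * b ^+ i / (n`!)%:R.
apply: (@binomial_inversion _ n P T) => j le_jn; rewrite {}/P.
under eq_bigr => i _ do rewrite -coefMn -mulrnAl.
rewrite -coef_sum -mulr_suml -exprD1n subrK coef_binpolyX_shift stirlingS.
rewrite horner_sum mulr_suml -(sum_binom_widen T le_jn) /T.
apply: eq_bigr => i _.
by rewrite hornerZ horner_gfact_shift -bin_ffact natrM -[RHS]mulr_natr; ring.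
Qed.

End StirlingCoefficients.

Section NegativeBinomialSeries.
Variable R : numFieldType.
Implicit Types (y z q : {poly R}) (lam : nat).

Lemma rbinomn0 lam : rbinom R lam 0 = 1.
Proof. by rewrite /rbinom big_ord0 divr1. Qed.

Lemma rbinom0S k : rbinom R 0 k.+1 = 0.
Proof. by rewrite /rbinom big_ord_recl !mul0r. Qed.

Lemma rbinomSS lam k :
  rbinom R lam.+1 k.+1 = rbinom R lam.+1 k + rbinom R lam k.+1.
Proof.
rewrite /rbinom big_ord_recr big_ord_recl /= factS natrM addn0.
under [X in _ = _ + _ * X / _]eq_bigr => i _ do rewrite /bump leq0n add1n addnS.
have Sk : k.+1%:R = k%:R + 1 :> R by rewrite -addn1 natrD.
have Slamk : (lam.+1 + k)%:R = lam%:R + k%:R + 1 :> R by rewrite addSn -addn1 !natrD.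
by rewrite Sk Slamk; field; rewrite fact_neq0 -Sk pnatr_eq0.
Qed.

Lemma mul1B_rbinom_sum z lam N :
  (1 - z) * \sum_(k < N.+1) (rbinom R lam.+1 k)%:P * z ^+ k
  = \sum_(k < N.+1) (rbinom R lam k)%:P * z ^+ k - (rbinom R lam.+1 N)%:P * z ^+ N.+1.
Proof.
elim: N => [|N IH]; first by rewrite !big_ord1 !rbinomn0; ring.
rewrite big_ord_recr /= mulrDr IH [in RHS]big_ord_recr /= rbinomSS polyCD !exprS.
ring.
Qed.

Definition negbinom n lam y := \sum_(k < n.+1) (rbinom R lam k)%:P * (- y) ^+ k.

Lemma negbinom0 n y : negbinom n 0 y = 1.
Proof.
rewrite /negbinom big_ord_recl rbinomn0 mulr1 big1 ?addr0 // => i _.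
by rewrite rbinom0S mul0r.
Qed.

Lemma negbinomS n lam y :
  y`_0 = 0 -> eq_upto n ((1 + y) * negbinom n lam.+1 y) (negbinom n lam y).
Proof.
move=> y0 i le_in; rewrite -{1}[y]opprK /negbinom mul1B_rbinom_sum.
by rewrite coefB coefCM coef_expr_small ?coefN ?y0 ?oppr0 // mulr0 subr0.
Qed.

Lemma eq_upto_exp_negbinom n lam y q : y`_0 = 0 ->
  eq_upto n ((1 + y) * q) 1 -> eq_upto n (q ^+ lam) (negbinom n lam y).
Proof.
move=> y0 yq; elim: lam => [|lam IH]; first by rewrite negbinom0.
rewrite exprSr; apply: (eq_upto_trans (q := negbinom n lam y * q)).
  exact: eq_uptoMr.
apply: (eq_upto_trans (q := (1 + y) * negbinom n lam.+1 y * q)).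
  exact/eq_uptoMr/eq_upto_sym/negbinomS.
apply: (eq_upto_trans (q := 1 * negbinom n lam.+1 y)); last by rewrite mul1r.
by rewrite mulrAC; apply: eq_uptoMr.
Qed.

End NegativeBinomialSeries.

Section GeneralisedEuler.
Variables (R : numFieldType) (n lam : nat) (a : R).

Definition inv_binpoly1D c := series_poly n (sinv (sadd (sbinpow a c) (sone R))).

Lemma inv_binpoly1DP c : eq_upto n ((binpoly n a c + 1) * inv_binpoly1D c) 1.
Proof.
apply: mul_series_poly_sinv; last first.
  exact: is_trunc_sadd (series_polyP _) (@is_trunc_sone R n).
by rewrite /sadd sbinpow0 /sone (_ : 1 + 1 = 2%:R) // pnatr_eq0.
Qed.

Lemma genEuler_poly b g : genEuler lam a b g n
  = (n`!)%:R * ((2%:P * inv_binpoly1D (b / a)) ^+ lam * binpoly n a (g / a))`_n.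
Proof.
rewrite /genEuler.
by rewrite (is_trunc_smul (is_trunc_spow _ (is_trunc_sscale _ (series_polyP _)))
                          (series_polyP _)).
Qed.

Lemma genEuler_stirling b g S : a != 0 -> is_genStirling a b g S ->
  genEuler lam a b g n
  = \sum_(k < n.+1) S n k * rbinom R lam k * (k`!)%:R * ((- b) ^+ k / 2 ^+ k).
Proof.
move=> a_neq0 stirlingS; rewrite genEuler_poly.
set w := binpoly n a (b / a) - 1; set q := inv_binpoly1D (b / a).
have w0 : (2^-1 *: w)`_0 = 0 by rewrite coefZ coefB binpoly_coef0 coef1 subrr mulr0.
have halfw_inv : eq_upto n ((1 + 2^-1 *: w) * (2%:P * q)) 1.
  have -> : (1 + 2^-1 *: w) * (2%:P * q) = (binpoly n a (b / a) + 1) * q.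
    rewrite mulrCA mulrA mulrDr mulr1 mul_polyC scalerA mulfV ?pnatr_eq0 //.
    rewrite scale1r polyC_natr.
    by rewrite /w; congr (_ * _); ring.
  exact: inv_binpoly1DP.
rewrite (eq_uptoMr (binpoly n a (g / a)) (eq_upto_exp_negbinom lam w0 halfw_inv)) //.
rewrite /negbinom mulr_suml coef_sum mulr_sumr; apply: eq_bigr => k _.
have le_kn : (k <= n)%N by rewrite -ltnS.
rewrite -scaleNr exprZn mul_polyC scalerA -scalerAl coefZ.
rewrite (coef_stirling a_neq0 stirlingS le_kn).
have -> : (- b) ^+ k / 2 ^+ k = (- 2^-1) ^+ k * b ^+ k.
  by rewrite -exprVn -!exprMn; congr (_ ^+ _); ring.
by field; rewrite fact_neq0.
Qed.

Lemma inv_binpoly1D_reflect c :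
  eq_upto n (inv_binpoly1D c) (binpoly n a (- c) * inv_binpoly1D (- c)).
Proof.
apply: (eq_upto_inv_uniq (inv_binpoly1DP c)).
set v := binpoly n a (- c); set q' := inv_binpoly1D (- c).
have -> : (binpoly n a c + 1) * (v * q') = (binpoly n a c * v + v) * q' by ring.
apply: (eq_upto_trans (q := (1 + v) * q')).
  apply/eq_uptoMr/eq_uptoD; last exact: eq_upto_refl.
  apply: (eq_upto_trans (q := binpoly n a (c + - c))); first exact: binpolyD.
  by rewrite addrN; apply: binpoly_exp0.
by rewrite addrC; apply: inv_binpoly1DP.
Qed.

Lemma genEuler_reflect b g :
  genEuler lam a b g n = genEuler lam a (- b) (g - b * lam%:R) n.
Proof.
rewrite !genEuler_poly mulNr; congr (_ * _).
set v := binpoly n a (- (b / a)); set q' := inv_binpoly1D (- (b / a)).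
have -> : (g - b * lam%:R) / a = lam%:R * - (b / a) + g / a by ring.
suff E : eq_upto n ((2%:P * inv_binpoly1D (b / a)) ^+ lam * binpoly n a (g / a))
                   ((2%:P * q') ^+ lam * binpoly n a (lam%:R * - (b / a) + g / a)).
  exact: E.
apply: (eq_upto_trans (q := (2%:P * (v * q')) ^+ lam * binpoly n a (g / a))).
  exact/eq_uptoMr/eq_uptoX/eq_uptoMl/inv_binpoly1D_reflect.
rewrite mulrCA exprMn -mulrA mulrCA; apply: eq_uptoMl.
apply: (eq_upto_trans (q := binpoly n a (lam%:R * - (b / a)) * binpoly n a (g / a))).
  exact/eq_uptoMr/binpolyX.
exact: binpolyD.
Qed.

End GeneralisedEuler.

Theorem mainTheorem11 (R : realFieldType) (alpha beta gamma : R) (lam : nat)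
  (S1 S2 : nat -> nat -> R) :
  alpha != 0 ->
  is_genStirling alpha beta gamma S1 ->
  is_genStirling alpha (- beta) (gamma - beta * lam%:R) S2 ->
  forall n : nat,
    genEuler lam alpha beta gamma n =
      \sum_(k < n.+1) S1 n k * rbinom R lam k * (k`!)%:R
                       * ((- beta) ^+ k / 2 ^+ k)
    /\
    genEuler lam alpha beta gamma n =
      \sum_(k < n.+1) S2 n k * rbinom R lam k * (k`!)%:R
                       * (beta ^+ k / 2 ^+ k).
Proof.
move=> alpha_neq0 stirling1 stirling2 n; split; first exact: genEuler_stirling.
by rewrite genEuler_reflect (genEuler_stirling _ _ alpha_neq0 stirling2) opprK.
Qed.
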